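(* For every $n\ge1$, the set $\Theta(\mathcal S^C_{2n}(321))$ equals the set of signed permutations in $B_n$ that avoid all six signed patterns $$321,\quad \bar3\,2\,1,\quad 3\,2\,\bar1,\quad \bar3\,2\,\bar1,\quad 1\,\bar2,\quad \bar1\,\bar2.$$
   Context: $B_n$ is the hyperoctahedral group: bijections $\sigma$ of $\{-n,\dots,-1,1,\dots,n\}$ with $\sigma(-i)=-\sigma(i)$, written as the word $\sigma(1)\cdots\sigma(n)$; $\bar a$ denotes $-a$, and $|\sigma|=|\sigma(1)|\cdots|\sigma(n)|\in\mathcal S_n$. $\mathcal S^C_{2n}(321)$ is the set of $321$-avoiding permutations $\pi\in\mathcal S_{2n}$ that are centrosymmetric, i.e. $\pi(i)+\pi(2n+1-i)=2n+1$ for all $i$. The map $\Theta$ sends a centrosymmetric $\pi\in\mathcal S_{2n}$ to the element of $B_n$ given, for $1\le i\le n$, by $\Theta(\pi)(i)=\pi(n+i)-n$ if $\pi(n+i)>n$ and $\Theta(\pi)(i)=\pi(n+i)-n-1$ otherwise. A signed permutation $\sigma\in B_n$ contains a signed pattern $\tau\in B_k$ if there are indices $1\le i_1<\dots<i_k\le n$ such that $|\sigma(i_1)|\cdots|\sigma(i_k)|$ is order-isomorphic to $|\tau|$ and $\sigma(i_j)$ has the same sign as $\tau(j)$ for each $j$; otherwise $\sigma$ avoids $\tau$. *)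

(* Permutations and signed permutations are represented
   by their one-line words (1-indexed values, as in the paper). *)
From HB Require Import structures.
From mathcomp Require Import all_boot all_order all_algebra.
Set Implicit Arguments. Unset Strict Implicit. Unset Printing Implicit Defensive.

Definition is_perm_word (m : nat) (pi : seq nat) : bool :=
  perm_eq pi (iota 1 m).

(* centrosymmetric: pi(i) + pi(m+1-i) = m+1 (here with 0-indexed positions) *)
Definition centrosymmetric (pi : seq nat) : Prop :=
  forall i, i < size pi ->
    nth 0 pi i + nth 0 pi (size pi - 1 - i) = (size pi).+1.

Definition avoids321 (pi : seq nat) : Prop :=
  ~ (exists i j k, [/\ i < j, j < k, k < size pi,
        nth 0 pi j < nth 0 pi i & nth 0 pi k < nth 0 pi j]).

Definition SC321 (n : nat) (pi : seq nat) : Prop :=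
  [/\ is_perm_word (2 * n) pi, centrosymmetric pi & avoids321 pi].

Definition Theta (n : nat) (pi : seq nat) : seq int :=
  [seq (if n < v then (v%:Z - n%:Z)%R else (v%:Z - n%:Z - 1)%R) | v <- drop n pi].

(* sigma is an element of B_n, given as the word sigma(1)...sigma(n):
   |sigma| is a permutation of {1..n} (this determines the odd bijection
   of {-n..-1,1..n}). *)
Definition signed_perm (n : nat) (w : seq int) : bool :=
  perm_eq [seq absz x | x <- w] (iota 1 n).

Definition contains_signed (sigma tau : seq int) : Prop :=
  exists s : seq int, [/\ subseq s sigma, size s = size tau,
    (forall a b, a < size tau -> b < size tau ->
       (absz (nth 0%R s a) < absz (nth 0%R s b)) =
       (absz (nth 0%R tau a) < absz (nth 0%R tau b))) &
    (forall a, a < size tau -> (0 < nth 0%R s a)%R = (0 < nth 0%R tau a)%R)].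

Definition avoids_signed (sigma tau : seq int) : Prop := ~ contains_signed sigma tau.

Definition six_patterns : seq (seq int) :=
  [:: [:: 3; 2; 1]%Z; [:: -3; 2; 1]%Z; [:: 3; 2; -1]%Z; [:: -3; 2; -1]%Z;
      [:: 1; -2]%Z; [:: -1; -2]%Z].

(* Theta reads the right half of pi through the order-preserving bijection
   [theta_entry n] from 1 < ... < 2n onto -n < ... < -1 < 1 < ... < n.  By
   centrosymmetry, pi is then the image under the inverse bijection of the
   doubled word sigma(-n) ... sigma(-1) sigma(1) ... sigma(n) of sigma = Theta(pi),
   so pi avoids 321 iff that doubled word has no decreasing triple.  The doubled
   word is antisymmetric under reversal, so the middle entry of such a triple can
   be taken in the right half; a short case analysis then shows that a decreasing
   triple exists iff sigma has entries a b c (in this order) with |c| < b < |a|,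
   or entries a b with b < -|a|.  The first condition is exactly an occurrence
   of one of 321, -3 2 1, 3 2 -1, -3 2 -1, the second one of 1 -2, -1 -2. *)

From mathcomp Require Import all_boot all_order all_algebra zify.
Set Implicit Arguments. Unset Strict Implicit. Unset Printing Implicit Defensive.
Import GRing.Theory Num.Theory.

Lemma subseq_iota0 N ix : subseq ix (iota 0 N) = sorted ltn ix && all (gtn N) ix.
Proof.
apply/idP/andP => [sub | [ix_sorted ix_lt]].
  split; first exact: (subseq_sorted ltn_trans sub (iota_ltn_sorted 0 N)).
  by apply/allP => i /(mem_subseq sub); rewrite mem_iota.
suff -> : ix = [seq i <- iota 0 N | i \in ix] by apply: filter_subseq.
apply: (irr_sorted_eq ltn_trans ltnn) => //.
  exact: (sorted_filter ltn_trans _ (iota_ltn_sorted 0 N)).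
move=> i; rewrite mem_filter mem_iota /= add0n.
by case: (boolP (i \in ix)) => [/(allP ix_lt) /= ->|]; rewrite ?andbF.
Qed.

Lemma subseq_nthP (T : eqType) (x0 : T) (s w : seq T) :
  reflect (exists2 ix, sorted ltn ix && all (gtn (size w)) ix & s = map (nth x0 w) ix)
          (subseq s w).
Proof.
apply: (iffP idP) => [/subseqP [m _ ->] | [ix ix_ok ->]].
  exists (mask m (iota 0 (size w))); first by rewrite -subseq_iota0 mask_subseq.
  by rewrite map_mask -/(mkseq _ _) mkseq_nth.
rewrite -subseq_iota0 in ix_ok.
by rewrite -[w in subseq _ w](mkseq_nth x0) /mkseq map_subseq.
Qed.

Lemma subseq_pairP (T : eqType) (x0 : T) (w : seq T) a b :
  subseq [:: a; b] w <->
  exists i j, [/\ i < j, j < size w, a = nth x0 w i & b = nth x0 w j].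
Proof.
split=> [/(subseq_nthP x0) [[|i [|j []]] //= ix_ok [-> ->]] | [i [j [lt_ij lt_j -> ->]]]].
  by exists i, j; split=> //; lia.
by apply/(subseq_nthP x0); exists [:: i; j] => //=; lia.
Qed.

Lemma subseq_tripleP (T : eqType) (x0 : T) (w : seq T) a b c :
  subseq [:: a; b; c] w <->
  exists i j k, [/\ i < j, j < k, k < size w &
                    [/\ a = nth x0 w i, b = nth x0 w j & c = nth x0 w k]].
Proof.
split=> [/(subseq_nthP x0) [[|i [|j [|k []]]] //= ix_ok [-> -> ->]]
        | [i [j [k [lt_ij lt_jk lt_k [-> -> ->]]]]]].
  by exists i, j, k; split=> //; lia.
by apply/(subseq_nthP x0); exists [:: i; j; k] => //=; lia.
Qed.

Lemma uniq_subset_perm (T : eqType) (s t : seq T) :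
  uniq s -> uniq t -> {subset s <= t} -> size t <= size s -> perm_eq s t.
Proof.
move=> s_uniq t_uniq sub_st le_ts.
by have [_ eq_st] := uniq_min_size s_uniq sub_st le_ts; apply: uniq_perm.
Qed.

Definition decreasing_triple (u : seq int) : Prop :=
  exists i j k, [/\ i < j, j < k, k < size u,
                    (nth 0 u j < nth 0 u i)%R & (nth 0 u k < nth 0 u j)%R].

Lemma avoids321_map (f : int -> nat) (u : seq int) :
  {in u &, {mono f : x y / (x < y)%R >-> x < y}} ->
  avoids321 (map f u) <-> ~ decreasing_triple u.
Proof.
move=> f_mono; have nth_lt a b : a < size u -> b < size u ->
    (nth 0 (map f u) a < nth 0 (map f u) b) = (nth 0%R u a < nth 0%R u b)%R.
  by move=> lt_a lt_b; rewrite !(nth_map 0%R) // f_mono // mem_nth.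
rewrite /avoids321 size_map.
split=> no321 [i [j [k [lt_ij lt_jk lt_k lt_ji lt_kj]]]]; apply: no321; exists i, j, k.
  by rewrite !nth_lt; try split; lia.
by rewrite -!nth_lt; try split; lia.
Qed.

Definition matches_signed (s tau : seq int) : Prop :=
  [/\ size s = size tau,
      forall a b, a < size tau -> b < size tau ->
        (absz (nth 0%R s a) < absz (nth 0%R s b)) =
        (absz (nth 0%R tau a) < absz (nth 0%R tau b))
    & forall a, a < size tau -> (0 < nth 0%R s a)%R = (0 < nth 0%R tau a)%R].

Lemma contains_signedE w tau :
  contains_signed w tau <-> exists2 s, subseq s w & matches_signed s tau.
Proof. by split=> [[s [? ? ? ?]] | [s ? [? ? ?]]]; exists s. Qed.

Definition long_patterns : seq (seq int) :=
  [:: [:: 3; 2; 1]; [:: -3; 2; 1]; [:: 3; 2; -1]; [:: -3; 2; -1]]%Z.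

Definition short_patterns : seq (seq int) := [:: [:: 1; -2]; [:: -1; -2]]%Z.

Lemma six_patternsE : six_patterns = long_patterns ++ short_patterns.
Proof. by []. Qed.

Lemma matches_long_patterns (a b c : int) :
  (exists2 tau, tau \in long_patterns & matches_signed [:: a; b; c] tau) <->
  (`|c| < b < `|a|)%R.
Proof.
split=> [[tau tau_long [_ iso sgn]] | cba].
  move: tau_long iso sgn; rewrite !inE => /or4P[] /eqP-> iso sgn;
  move: (iso 0 1 isT isT) (iso 1 0 isT isT) (iso 1 2 isT isT)
        (iso 2 1 isT isT) (sgn 1 isT) => /=; lia.
have [a_pos | a_neg] := ltrP 0%R a; have [c_pos | c_neg] := ltrP 0%R c;
  [exists [:: 3; 2; 1]%Z | exists [:: 3; 2; -1]%Z
  | exists [:: -3; 2; 1]%Z | exists [:: -3; 2; -1]%Z].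
all: rewrite ?inE ?eqxx ?orbT //.
all: split=> //; first by move=> [|[|[|?]]] [|[|[|?]]] //=; lia.
all: by move=> [|[|[|?]]] //=; lia.
Qed.

Lemma matches_short_patterns (a b : int) :
  (exists2 tau, tau \in short_patterns & matches_signed [:: a; b] tau) <->
  (b < - `|a|)%R.
Proof.
split=> [[tau tau_short [_ iso sgn]] | ba].
  move: tau_short iso sgn; rewrite !inE => /orP[] /eqP-> iso sgn;
  move: (iso 0 1 isT isT) (sgn 0 isT) (sgn 1 isT) => /=; lia.
have [a_pos | a_neg] := ltrP 0%R a; [exists [:: 1; -2]%Z | exists [:: -1; -2]%Z].
all: rewrite ?inE ?eqxx ?orbT //.
all: split=> //; first by move=> [|[|?]] [|[|?]] //=; lia.
all: by move=> [|[|?]] //=; lia.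
Qed.

Section SignedWords.
Local Open Scope ring_scope.

Definition pattern_witness (w : seq int) : Prop :=
  (exists i j k, [/\ (i < j)%N, (j < k)%N, (k < size w)%N &
                     `|nth 0 w k| < nth 0 w j < `|nth 0 w i|]) \/
  (exists i j, [/\ (i < j)%N, (j < size w)%N & nth 0 w j < - `|nth 0 w i|]).

Lemma avoids_six_patternsP w :
  (forall tau, tau \in six_patterns -> avoids_signed w tau) <-> ~ pattern_witness w.
Proof.
suff six_witness : (exists2 tau, tau \in six_patterns & contains_signed w tau) <->
                   pattern_witness w.
  split=> [avoid /six_witness [tau /avoid] // | no_witness tau tau6 w_tau].
  by apply: no_witness; apply/six_witness; exists tau.
rewrite six_patternsE; split=> [[tau] | [[i [j [k [lt_ij lt_jk lt_k]]]] | [i [j [lt_ij lt_j]]]]].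
- rewrite mem_cat => /orP [tau_long | tau_short] /contains_signedE [s sub_s match_s].
    have: size s = 3 by case: match_s => -> _ _; move: tau_long; rewrite !inE => /or4P[] /eqP->.
    case: s sub_s match_s => [|a [|b [|c []]]] // /(subseq_tripleP 0).
    move=> [i [j [k [lt_ij lt_jk lt_k [-> -> ->]]]]] match_s _.
    by left; exists i, j, k; split=> //; apply/matches_long_patterns; exists tau.
  have: size s = 2 by case: match_s => -> _ _; move: tau_short; rewrite !inE => /orP[] /eqP->.
  case: s sub_s match_s => [|a [|b []]] // /(subseq_pairP 0).
  move=> [i [j [lt_ij lt_j -> ->]]] match_s _.
  by right; exists i, j; split=> //; apply/matches_short_patterns; exists tau.
- case/matches_long_patterns => tau tau_long match_ijk.
  exists tau; rewrite ?mem_cat ?tau_long //; apply/contains_signedE.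
  by eexists; last exact: match_ijk; apply/(subseq_tripleP 0); exists i, j, k.
case/matches_short_patterns => tau tau_short match_ij.
exists tau; rewrite ?mem_cat ?tau_short ?orbT //; apply/contains_signedE.
by eexists; last exact: match_ij; apply/(subseq_pairP 0); exists i, j.
Qed.

(* The doubled word sigma(-n) ... sigma(-1) sigma(1) ... sigma(n) of sigma. *)
Definition sym_word (w : seq int) : seq int := [seq - v | v <- rev w] ++ w.

Lemma size_sym_word w : size (sym_word w) = (2 * size w)%N.
Proof. by rewrite size_cat size_map size_rev mul2n addnn. Qed.

Lemma mem_sym_word w v : (v \in sym_word w) = (v \in w) || (- v \in w).
Proof. by rewrite mem_cat orbC -[v in v \in map _ _]opprK (mem_map oppr_inj) mem_rev. Qed.

Lemma mem_map_absz w v : (absz v \in map absz w) = (v \in w) || (- v \in w).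
Proof.
apply/mapP/orP => [[u u_w /eqP] | [v_w | Nv_w]]; last 2 first.
- by exists v.
- by exists (- v); rewrite ?abszN.
by case: (eqVneq u v) => [<- | ne_uv] abs_uv; [left | right; rewrite (_ : - v = u) //; lia].
Qed.

Lemma uniq_sym_word w : uniq (sym_word w) = uniq (map absz w) && (0 \notin w).
Proof.
elim: w => // x w IHw.
have sym_cons : perm_eq (sym_word (x :: w)) ([:: - x; x] ++ sym_word w).
  by rewrite /sym_word rev_cons map_rcons -cats1 -catA -[[:: - x] ++ _]/([:: - x; x] ++ w)
             perm_catCA perm_refl.
rewrite (perm_uniq sym_cons) /= IHw !inE !mem_sym_word mem_map_absz opprK.
have -> : (- x == x) = (x == 0) by lia.
rewrite [0 == x]eq_sym.
by case: (x \in w) (- x \in w) (x == 0) (0 \in w) (uniq _) => [] [] [] [] [].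
Qed.

Lemma nth_sym_word_right w i : nth 0 (sym_word w) (size w + i) = nth 0 w i.
Proof. by rewrite nth_cat size_map size_rev ltnNge leq_addr /= addKn. Qed.

Lemma nth_sym_word_left w i : (i < size w)%N ->
  nth 0 (sym_word w) ((size w).-1 - i) = - nth 0 w i.
Proof.
move=> lt_i_w; have lt_j_w : ((size w).-1 - i < size w)%N by lia.
rewrite nth_cat size_map size_rev lt_j_w (nth_map 0) ?size_rev // nth_rev //.
by have -> : (size w - ((size w).-1 - i).+1 = i)%N by lia.
Qed.

Lemma sym_word_indexP w p : (p < size (sym_word w))%N ->
  (exists2 i, (i < size w)%N &
     p = ((size w).-1 - i)%N /\ nth 0 (sym_word w) p = - nth 0 w i) \/
  (exists2 i, (i < size w)%N & p = (size w + i)%N /\ nth 0 (sym_word w) p = nth 0 w i).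
Proof.
rewrite size_sym_word => lt_p; case: (ltnP p (size w)) => [lt_p_w | le_w_p].
  left; exists ((size w).-1 - p)%N; first lia.
  split; first lia.
  by rewrite -nth_sym_word_left; [congr nth; lia | lia].
right; exists (p - size w)%N; first lia.
split; first lia.
by rewrite -(nth_sym_word_right w) subnKC.
Qed.

Lemma rev_sym_word w : rev (sym_word w) = [seq - v | v <- sym_word w].
Proof.
rewrite /sym_word rev_cat map_cat -map_rev revK -map_comp.
by congr (_ ++ _); rewrite -[LHS]map_id; apply: eq_map => v /=; rewrite opprK.
Qed.

Lemma nth_sym_word_mirror w p : (p < size (sym_word w))%N ->
  nth 0 (sym_word w) (size (sym_word w) - p.+1) = - nth 0 (sym_word w) p.
Proof. by move=> lt_p; rewrite -nth_rev // rev_sym_word (nth_map 0). Qed.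

Lemma decreasing_triple_sym_word_right w : decreasing_triple (sym_word w) ->
  exists p j k, [/\ (p < size w + j)%N, (j < k < size w)%N,
                    nth 0 w j < nth 0 (sym_word w) p & nth 0 w k < nth 0 w j].
Proof.
move=> [p [q [r [lt_pq lt_qr lt_r uqp urq]]]].
wlog le_w_q : p q r lt_pq lt_qr lt_r uqp urq / (size w <= q)%N.
  move=> right_middle; case: (leqP (size w) q) => [le_w_q | lt_q_w].
    exact: (right_middle p q r).
  have size_sym := size_sym_word w.
  apply: (right_middle (size (sym_word w) - r.+1)%N (size (sym_word w) - q.+1)%N
                       (size (sym_word w) - p.+1)%N);
    rewrite ?nth_sym_word_mirror; lia.
exists p, (q - size w)%N, (r - size w)%N.
rewrite size_sym_word in lt_r; have le_w_r : (size w <= r)%N by lia.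
by rewrite -!(nth_sym_word_right w) !subnKC //; split=> //; lia.
Qed.

Lemma decreasing_triple_sym_word w : uniq (sym_word w) ->
  decreasing_triple (sym_word w) <-> pattern_witness w.
Proof.
move=> sym_uniq; split=> [/decreasing_triple_sym_word_right | ].
  move=> [p [j [k [lt_p /andP [lt_jk lt_k] up_wj wk_wj]]]].
  have lt_j : (j < size w)%N by lia.
  have witness_jk : nth 0 w k < - `|nth 0 w j| -> pattern_witness w.
    by move=> wk_lt; right; exists j, k.
  have [wj_pos | wj_le0] := ltrP 0 (nth 0 w j); last by apply: witness_jk; lia.
  have [wk_lt | wk_ge] := ltrP (nth 0 w k) (- nth 0 w j).
    by apply: witness_jk; lia.
  have wk_ne : nth 0 w k != - nth 0 w j.
    rewrite -nth_sym_word_right -(nth_sym_word_left lt_j) nth_uniq ?size_sym_word //; lia.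
  have witness_ijk i : (i < j)%N -> nth 0 w j < `|nth 0 w i| -> pattern_witness w.
    by move=> lt_ij wj_lt; left; exists i, j, k; split=> //; lia.
  have lt_p_sym : (p < size (sym_word w))%N by rewrite size_sym_word; lia.
  case: (sym_word_indexP lt_p_sym) => -[i lt_i [p_eq up_eq]]; rewrite up_eq in up_wj.
    have [lt_ij | le_ji] := ltnP i j; first by apply: (witness_ijk i); lia.
    have ne_ij : i != j by apply: contraTneq up_wj => ->; lia.
    by right; exists j, i; split=> //; lia.
  by apply: (witness_ijk i); lia.
move=> [[i [j [k [lt_ij lt_jk lt_k cba]]]] | [i [j [lt_ij lt_j ba]]]].
  have [p [lt_p up]] : exists p, (p < size w + j)%N /\ nth 0 (sym_word w) p = `|nth 0 w i|.
    have lt_i : (i < size w)%N by lia.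
    have [wi_pos | wi_le0] := ltrP 0 (nth 0 w i).
      by exists (size w + i)%N; rewrite nth_sym_word_right gtr0_norm //; split=> //; lia.
    by exists ((size w).-1 - i)%N; rewrite nth_sym_word_left // ler0_norm //; split=> //; lia.
  exists p, (size w + j)%N, (size w + k)%N.
  by rewrite size_sym_word !nth_sym_word_right up; split; lia.
exists ((size w).-1 - j)%N, ((size w).-1 - i)%N, (size w + j)%N.
by rewrite size_sym_word !nth_sym_word_left ?nth_sym_word_right; try split; lia.
Qed.

End SignedWords.

Definition signed_range (n : nat) : pred int := [pred v | 0 < absz v <= n].

Definition signed_rank (n : nat) (v : int) : nat :=
  if (0 < v)%R then n + absz v else n.+1 - absz v.

Definition theta_entry (n v : nat) : int :=
  if n < v then (v%:Z - n%:Z)%R else (v%:Z - n%:Z - 1)%R.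

Lemma ThetaE n pi : Theta n pi = map (theta_entry n) (drop n pi).
Proof. by []. Qed.

Lemma theta_entryK n : cancel (theta_entry n) (signed_rank n).
Proof. by move=> v; rewrite /theta_entry /signed_rank; case: ifP; case: ifP; lia. Qed.

Lemma signed_rankK n : {in signed_range n, cancel (signed_rank n) (theta_entry n)}.
Proof. by move=> v; rewrite inE /theta_entry /signed_rank; case: ifP; case: ifP; lia. Qed.

Lemma theta_entry_range n v : 0 < v <= 2 * n -> theta_entry n v \in signed_range n.
Proof. by rewrite inE /theta_entry; case: ifP; lia. Qed.

Lemma signed_rank_range n v : v \in signed_range n -> signed_rank n v \in iota 1 (2 * n).
Proof. by rewrite inE mem_iota /signed_rank; case: ifP; lia. Qed.

Lemma signed_rankN n v :
  v \in signed_range n -> signed_rank n (- v) + signed_rank n v = (2 * n).+1.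
Proof. by rewrite inE /signed_rank; case: ifP; case: ifP; lia. Qed.

Lemma ltn_signed_rank n :
  {in signed_range n &, {mono signed_rank n : u v / (u < v)%R >-> u < v}}.
Proof. by move=> u v; rewrite !inE /signed_rank; case: ifP; case: ifP; lia. Qed.

Lemma signed_permP n w :
  signed_perm n w <-> [/\ size w = n, uniq (map absz w) & {subset w <= signed_range n}].
Proof.
split=> [w_perm | [size_w abs_uniq w_range]].
  split; first by have := perm_size w_perm; rewrite size_map size_iota.
    by rewrite (perm_uniq w_perm) iota_uniq.
  by move=> v /(map_f absz); rewrite (perm_mem w_perm) mem_iota inE; lia.
apply: uniq_subset_perm; rewrite ?iota_uniq ?size_map ?size_iota ?size_w //.
by move=> x /mapP [v /w_range]; rewrite inE mem_iota => ? ->; lia.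
Qed.

Lemma sym_word_range n w :
  {subset w <= signed_range n} -> {subset sym_word w <= signed_range n}.
Proof.
move=> w_range v; rewrite mem_sym_word => /orP [/w_range | /w_range]; rewrite !inE //.
by rewrite abszN.
Qed.

Definition theta_preimage (n : nat) (w : seq int) : seq nat :=
  map (signed_rank n) (sym_word w).

Lemma theta_preimageK n w : size w = n -> {subset w <= signed_range n} ->
  Theta n (theta_preimage n w) = w.
Proof.
move=> size_w w_range; rewrite ThetaE /theta_preimage /sym_word map_cat drop_cat.
rewrite size_map size_map size_rev size_w ltnn subnn drop0 -map_comp.
by rewrite -[RHS]map_id; apply/eq_in_map => v /w_range /signed_rankK.
Qed.

Lemma theta_preimage_Theta n pi : is_perm_word (2 * n) pi -> centrosymmetric pi ->
  theta_preimage n (Theta n pi) = pi.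
Proof.
move=> pi_perm pi_centro.
have size_pi : size pi = 2 * n by rewrite (perm_size pi_perm) size_iota.
have size_Theta : size (Theta n pi) = n by rewrite ThetaE size_map size_drop size_pi; lia.
apply: (eq_from_nth (x0 := 0)); first by rewrite size_map size_sym_word size_Theta.
move=> p; rewrite size_map => lt_p; rewrite (nth_map 0%R) //.
have nth_Theta i : i < n -> nth 0%R (Theta n pi) i = theta_entry n (nth 0 pi (n + i)).
  by move=> lt_i; rewrite ThetaE (nth_map 0) ?nth_drop // size_drop size_pi; lia.
case: (sym_word_indexP lt_p) => -[i]; rewrite size_Theta => lt_i [-> ->].
  have pi_range : 0 < nth 0 pi (n + i) <= 2 * n.
    by rewrite -mem_iota -(perm_mem pi_perm) mem_nth // size_pi; lia.
  have := signed_rankN (theta_entry_range pi_range); rewrite theta_entryK.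
  have := pi_centro (n.-1 - i); rewrite size_pi.
  have -> : 2 * n - 1 - (n.-1 - i) = n + i by lia.
  by rewrite nth_Theta //; lia.
by rewrite nth_Theta // theta_entryK.
Qed.

Lemma avoids321_theta_preimage n w :
  {subset w <= signed_range n} -> uniq (sym_word w) ->
  avoids321 (theta_preimage n w) <-> ~ pattern_witness w.
Proof.
move=> w_range sym_uniq.
have rank_mono : {in sym_word w &, {mono signed_rank n : u v / (u < v)%R >-> u < v}}.
  move=> u v /(sym_word_range w_range) u_range /(sym_word_range w_range).
  exact: ltn_signed_rank.
exact: iff_trans (avoids321_map rank_mono)
                 (not_iff_compat (decreasing_triple_sym_word sym_uniq)).
Qed.

Lemma theta_preimage_SC321 n w :
  signed_perm n w -> ~ pattern_witness w -> SC321 n (theta_preimage n w).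
Proof.
move=> /signed_permP [size_w abs_uniq w_range] no_witness.
have sym_range := sym_word_range w_range.
have sym_uniq : uniq (sym_word w).
  by rewrite uniq_sym_word abs_uniq; apply/negP => /w_range.
split.
- apply: uniq_subset_perm; rewrite ?iota_uniq ?size_map ?size_sym_word ?size_iota ?size_w //.
    rewrite map_inj_in_uniq //; apply: sub_in2 (can_in_inj (@signed_rankK n)).
    exact: sym_range.
  by move=> _ /mapP [v /sym_range v_range ->]; exact: signed_rank_range.
- move=> i; rewrite size_map => lt_i.
  have -> : size (sym_word w) - 1 - i = size (sym_word w) - i.+1 by lia.
  have lt_j : size (sym_word w) - i.+1 < size (sym_word w) by lia.
  rewrite !(nth_map 0%R) // nth_sym_word_mirror // addnC.
  by rewrite size_sym_word size_w signed_rankN // sym_range // mem_nth.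
exact: (avoids321_theta_preimage w_range sym_uniq).2 no_witness.
Qed.

Lemma Theta_of_SC321 n pi :
  SC321 n pi -> signed_perm n (Theta n pi) /\ ~ pattern_witness (Theta n pi).
Proof.
move=> [pi_perm pi_centro pi_avoid].
have pi_eq := theta_preimage_Theta pi_perm pi_centro.
have size_pi : size pi = 2 * n by rewrite (perm_size pi_perm) size_iota.
have w_range : {subset Theta n pi <= signed_range n}.
  move=> _ /mapP [v /mem_drop v_pi ->]; apply: theta_entry_range.
  by rewrite -mem_iota -(perm_mem pi_perm).
have sym_uniq : uniq (sym_word (Theta n pi)).
  by move: (iota_uniq 1 (2 * n)); rewrite -(perm_uniq pi_perm) -{1}pi_eq => /map_uniq.
split; last by apply/(avoids321_theta_preimage w_range sym_uniq); rewrite pi_eq.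
apply/signed_permP; split=> //; first by rewrite ThetaE size_map size_drop size_pi; lia.
by move: sym_uniq; rewrite uniq_sym_word => /andP [].
Qed.

Theorem mainTheorem11 (n : nat) (hn : 1 <= n) (w : seq int) :
  (exists pi : seq nat, SC321 n pi /\ Theta n pi = w) <->
  (signed_perm n w /\ forall tau, tau \in six_patterns -> avoids_signed w tau).
Proof.
split=> [[pi [pi_SC <-]] | [w_perm w_avoid]].
  by have [? ?] := Theta_of_SC321 pi_SC; split=> //; apply/avoids_six_patternsP.
exists (theta_preimage n w); split.
  by apply: theta_preimage_SC321 => //; apply/avoids_six_patternsP.
by case/signed_permP: w_perm => size_w _ w_range; exact: theta_preimageK.
Qed.
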